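(* Let $p$ be an odd prime, $\mathbb{F}$ a field of characteristic $p$, and $a,s$ natural numbers with $a<p$. Then, as $\mathbb{F}C$-modules, $$H^{(a^{sp})}(R_{as})\big\downarrow_C\cong\bigoplus_{\delta}K_\delta,$$ where $\delta$ runs over all set partitions of $\{1,\ldots,as\}$ into $s$ sets of size $a$.
   Context: $H^{(a^{sp})}$ is the $\mathbb{F}S_{asp}$-permutation module with basis the set partitions of $\{1,\ldots,asp\}$ into $sp$ sets of size $a$. For $j\geq1$ let $z_j=(p(j-1)+1,\ldots,pj)$ and $\mathcal{O}_j=\{p(j-1)+1,\ldots,pj\}$; $\sigma=z_1\cdots z_{as}$, $R_{as}=\langle\sigma\rangle$, and $C=\langle z_1\rangle\times\cdots\times\langle z_{as}\rangle\leq N_{S_{asp}}(R_{as})$. The Brauer quotient $H^{(a^{sp})}(R_{as})$ (fixed points of $R_{as}$ modulo relative traces from proper subgroups) is identified with the $\mathbb{F}$-span of the set partitions fixed by $R_{as}$. Given a set partition $\delta=\{\delta_1,\ldots,\delta_s\}$ of $\{1,\ldots,as\}$ into sets of size $a$, a fixed set partition $\omega$ has type $\delta$ if there are sets $A_1,\ldots,A_s$ with $|A_i\cap\mathcal{O}_j|=1$ if $j\in\delta_i$ and $0$ otherwise, such that $\omega=\{A_i\sigma^k: 1\leq i\leq s, 0\leq k\leq p-1\}$; $K_\delta$ is the subspace of $H^{(a^{sp})}(R_{as})$ spanned by the fixed set partitions of type $\delta$. *)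

From HB Require Import structures.
From mathcomp Require Import all_boot all_order all_algebra.
Unset Printing Implicit Defensive.
Import GRing.Theory.

(* Points {1,...,N} are represented 0-based by 'I_N, with N = a * s * p.
   The orbit O_j (1-based j) is { i : i %/ p = j-1 } (0-based). *)

(* The element of C = <z_1> x ... x <z_as> acting as z_{j+1}^{k j} on the
   (0-based) j-th orbit: i |-> (i %/ p) * p + ((i %% p + k (i %/ p)) %% p). *)
Definition cyc (p N : nat) (k : nat -> nat) (i : 'I_N) : 'I_N :=
  insubd i ((i %/ p) * p + (i %% p + k (i %/ p)) %% p).

Definition sig (p N : nat) : 'I_N -> 'I_N := cyc p N (fun _ => 1).

Definition orb (p N j : nat) : {set 'I_N} := [set i : 'I_N | (i %/ p) == j].

Definition sp_act N (g : 'I_N -> 'I_N) (w : {set {set 'I_N}}) : {set {set 'I_N}} :=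
  [set g @: B | B : {set 'I_N} in w].
Definition sp_preim N (g : 'I_N -> 'I_N) (w : {set {set 'I_N}}) : {set {set 'I_N}} :=
  [set g @^-1: B | B : {set 'I_N} in w].

Definition is_setpart N (a b : nat) (w : {set {set 'I_N}}) : bool :=
  [&& partition w [set: 'I_N], #|w| == b & [forall B in w, #|B| == a]].

(* set partitions of {1..asp} into sp sets of size a, fixed by R_{as} = <sigma> *)
Definition fixedSP (p a s : nat) (w : {set {set 'I_(a * s * p)}}) : bool :=
  is_setpart (a * s * p) a (s * p) w && (sp_act (a * s * p) (sig p (a * s * p)) w == w).

Definition has_type (p a s : nat) (d : {set {set 'I_(a * s)}})
  (w : {set {set 'I_(a * s * p)}}) : bool :=
  [exists A : {ffun {set 'I_(a * s)} -> {set 'I_(a * s * p)}},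
     [forall D in d, forall j : 'I_(a * s),
        #|A D :&: orb p (a * s * p) j| == (j \in D : nat)]
     && (w == [set (iter k (sig p (a * s * p))) @: A D | D : {set 'I_(a * s)} in d, k : 'I_p in [set: 'I_p]])].

(* The ambient permutation-module coordinates: F-valued functions on subsets
   of subsets of {1..asp}; the Brauer quotient is identified with the span of
   the basis vectors of fixed set partitions. *)
Definition Wsp (F : fieldType) (N : nat) := {ffun {set {set 'I_N}} -> F^o}.

Definition bvec (F : fieldType) N (w : {set {set 'I_N}}) : Wsp F N :=
  [ffun x => ((x == w)%:R)%R].

Definition Hfix (F : fieldType) (p a s : nat) : {vspace Wsp F (a * s * p)} :=
  (<<[seq bvec F (a * s * p) w | w <- enum [pred w | fixedSP p a s w]]>>)%VS.

Definition Kdelta (F : fieldType) (p a s : nat) (d : {set {set 'I_(a * s)}})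
  : {vspace Wsp F (a * s * p)} :=
  (<<[seq bvec F (a * s * p) w | w <- enum [pred w | fixedSP p a s w && has_type p a s d w]]>>)%VS.

Definition Deltas (a s : nat) : {set {set {set 'I_(a * s)}}} :=
  [set d | is_setpart (a * s) a s d].

Definition actC (F : fieldType) (p a s : nat) (k : nat -> nat)
  (v : Wsp F (a * s * p)) : Wsp F (a * s * p) :=
  [ffun w => v (sp_preim (a * s * p) (cyc p (a * s * p) k) w)].

(* Let w be a set partition fixed by sigma, with blocks of size a < p. A block meets each
   sigma-orbit O_j at most once: if it contained x and sigma^k x with 0 < k < p, it would be
   sigma^k-stable and would contain the p distinct points sigma^(n k) x. So the supports
   {j | B meets O_j} of the blocks of w form a set partition delta of {1..as} into s sets of
   size a, w has type delta, and delta is recovered from w as the set of these supports.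
   Hence the basis of H(R_as) made of the fixed partitions is split by type, which gives the
   direct sum. Every element of C commutes with sigma and preserves each O_j, so it
   preserves both fixedness and type. *)

From HB Require Import structures.
From mathcomp Require Import all_boot all_order all_algebra zify.
Import GRing.Theory.
Set Implicit Arguments. Unset Strict Implicit.

Lemma eqn_prime_modM2r q k n1 n2 : prime q -> ~~ (q %| k) ->
  (n1 * k == n2 * k %[mod q]) = (n1 == n2 %[mod q]).
Proof.
move=> q_pr qNk; wlog le12 : n1 n2 / n1 <= n2.
  by move=> IH; case: (leqP n1 n2) => [|/ltnW] /IH; rewrite // eq_sym => ->; rewrite eq_sym.
rewrite eq_sym [RHS]eq_sym !eqn_mod_dvd ?leq_mul2r ?le12 ?orbT // -mulnBl.
by rewrite Euclid_dvdM // (negbTE qNk) orbF.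
Qed.

Section OrbitArithmetic.
Variables m p : nat.
Local Notation N := (m * p).
Local Notation sigma := (sig p N).

Lemma ord_p_gt0 (i : 'I_N) : 0 < p.
Proof. by have := leq_ltn_trans (leq0n i) (ltn_ord i); rewrite muln_gt0 => /andP []. Qed.

Lemma blk_lt (i : 'I_N) : i %/ p < m.
Proof. by rewrite ltn_divLR ?(ord_p_gt0 i). Qed.

Definition blk (i : 'I_N) : 'I_m := Ordinal (blk_lt i).

Definition supp (B : {set 'I_N}) : {set 'I_m} := [set blk x | x in B].

Lemma orbE (x : 'I_N) (j : 'I_m) : (x \in orb p N j) = (blk x == j).
Proof. by rewrite inE -(inj_eq val_inj). Qed.

Lemma val_cyc k (i : 'I_N) : val (cyc p N k i) = i %/ p * p + (i %% p + k (i %/ p)) %% p.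
Proof.
rewrite /cyc val_insubd ifT //.
have r_lt := ltn_pmod (i %% p + k (i %/ p)) (ord_p_gt0 i).
have : (i %/ p).+1 * p <= m * p by rewrite leq_mul2r blk_lt orbT.
by rewrite mulSn; lia.
Qed.

Lemma blk_cyc k (i : 'I_N) : blk (cyc p N k i) = blk i.
Proof.
have p_gt0 := ord_p_gt0 i.
by apply: val_inj; rewrite /= val_cyc divnMDl // (divn_small (ltn_pmod _ p_gt0)) addn0.
Qed.

Lemma cyc_modp k (i : 'I_N) : cyc p N k i %% p = (i %% p + k (i %/ p)) %% p.
Proof. by rewrite val_cyc modnMDl modn_mod. Qed.

Lemma eq_ord_divmod (x y : 'I_N) : x %/ p = y %/ p -> x %% p = y %% p -> x = y.
Proof.
by move=> eq_div eq_mod; apply: val_inj; rewrite /= (divn_eq x p) (divn_eq y p) eq_div eq_mod.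
Qed.

Lemma cyc_divp k (i : 'I_N) : cyc p N k i %/ p = i %/ p.
Proof. exact: (congr1 val (blk_cyc k i)). Qed.

Lemma cyc_inj k : injective (cyc p N k).
Proof.
move=> x y eq_xy; have eq_div : x %/ p = y %/ p by rewrite -(cyc_divp k) eq_xy cyc_divp.
apply: eq_ord_divmod => //; apply/eqP.
have /eqP := congr1 (modn^~ p) (congr1 val eq_xy).
by rewrite !cyc_modp eq_div eqn_modDr !modn_mod.
Qed.

Lemma cyc_comm k k' (x : 'I_N) : cyc p N k (cyc p N k' x) = cyc p N k' (cyc p N k x).
Proof. by apply: eq_ord_divmod; rewrite ?cyc_divp // !cyc_modp !cyc_divp !modnDml addnAC. Qed.

Lemma iter_sigE n (x : 'I_N) : iter n sigma x = cyc p N (fun=> n) x.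
Proof.
elim: n => [|n IHn]; [|rewrite iterS IHn /sig]; apply: eq_ord_divmod; rewrite ?cyc_divp //.
  by rewrite cyc_modp addn0 modn_mod.
by rewrite !cyc_modp modnDml -addnA addn1.
Qed.

Lemma iter_sig_cyc n k (x : 'I_N) : iter n sigma (cyc p N k x) = cyc p N k (iter n sigma x).
Proof. by rewrite !iter_sigE cyc_comm. Qed.

Lemma blk_iter_sig n (x : 'I_N) : blk (iter n sigma x) = blk x.
Proof. by rewrite iter_sigE blk_cyc. Qed.

Lemma same_blk_iter_sig (x y : 'I_N) :
  blk x = blk y -> exists2 k, k < p & y = iter k sigma x.
Proof.
move=> /(congr1 val) /= eq_div; have p_gt0 := ord_p_gt0 x.
exists ((y %% p + (p - x %% p)) %% p); first by rewrite ltn_pmod.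
rewrite iter_sigE; apply: eq_ord_divmod; rewrite ?cyc_divp // cyc_modp modnDmr.
have x_lt := ltn_pmod x p_gt0.
have -> : x %% p + (y %% p + (p - x %% p)) = y %% p + p by lia.
by rewrite modnDr modn_mod.
Qed.

Lemma iter_sig_mulr_inj k (x : 'I_N) : prime p -> 0 < k < p ->
  injective (fun n : 'I_p => iter (n * k) sigma x).
Proof.
move=> p_pr /andP [k_gt0 k_lt] n1 n2 /(congr1 (fun y : 'I_N => y %% p)).
rewrite !iter_sigE !cyc_modp => /eqP; rewrite eqn_modDl eqn_prime_modM2r ?gtnNdvd //.
by rewrite !modn_small // => /eqP /val_inj.
Qed.

Lemma supp_orbE (B : {set 'I_N}) j : (j \in supp B) = (B :&: orb p N j != set0).
Proof.
apply/imsetP/set0Pn => [[x Bx ->]|[x]]; first by exists x; rewrite in_setI Bx orbE eqxx.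
by rewrite in_setI orbE => /andP [Bx /eqP <-]; exists x.
Qed.

Lemma supp_iter_sig n (B : {set 'I_N}) : supp (iter n sigma @: B) = supp B.
Proof. by rewrite /supp -imset_comp; apply: eq_imset => x /=; rewrite blk_iter_sig. Qed.

End OrbitArithmetic.

Arguments blk {m p} i.
Arguments supp {m p} B.

Lemma preimset_imset (aT rT : finType) (g : aT -> rT) (B : {set aT}) :
  injective g -> g @^-1: (g @: B) = B.
Proof. by move=> g_inj; apply/setP => x; rewrite inE mem_imset. Qed.

Lemma imset_preimset (T : finType) (g : T -> T) (B : {set T}) :
  injective g -> g @: (g @^-1: B) = B.
Proof.
move=> g_inj; apply/setP => x; apply/imsetP/idP => [[y]|Bx]; first by rewrite inE => ? ->.
by exists (finv g x); rewrite ?inE f_finv.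
Qed.

Lemma imset_setT_inj (T : finType) (g : T -> T) :
  injective g -> g @: [set: T] = [set: T].
Proof. by move=> g_inj; apply/eqP; rewrite eqEcard subsetT (card_imset _ g_inj) leqnn. Qed.

Lemma trivIset_mem_eq (T : finType) (P : {set {set T}}) A B x :
  trivIset P -> A \in P -> B \in P -> x \in A -> x \in B -> A = B.
Proof. by move=> tP PA PB Ax Bx; rewrite -(def_pblock tP PA Ax) (def_pblock tP PB Bx). Qed.

Lemma trivIset_memP (T : finType) (P : {set {set T}}) :
  (forall A B x, A \in P -> B \in P -> x \in A -> x \in B -> A = B) -> trivIset P.
Proof.
move=> eqP_P; apply/trivIsetP => A B PA PB; apply: contraNT => /pred0Pn [x /andP [Ax Bx]].
by rewrite (eqP_P A B x).
Qed.

Lemma sp_preim_act N (g : 'I_N -> 'I_N) w : injective g -> sp_preim N g (sp_act N g w) = w.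
Proof.
move=> g_inj; rewrite /sp_preim /sp_act -imset_comp (eq_imset (g := id)) ?imset_id //.
by move=> B /=; rewrite preimset_imset.
Qed.

Lemma sp_act_preim N (g : 'I_N -> 'I_N) w : injective g -> sp_act N g (sp_preim N g w) = w.
Proof.
move=> g_inj; rewrite /sp_preim /sp_act -imset_comp (eq_imset (g := id)) ?imset_id //.
by move=> B /=; rewrite imset_preimset.
Qed.

Lemma setpart_act N (g : 'I_N -> 'I_N) a b w :
  injective g -> is_setpart N a b w -> is_setpart N a b (sp_act N g w).
Proof.
move=> g_inj /and3P [w_part /eqP card_w /forall_inP w_size]; apply/and3P; split.
- by rewrite /sp_act -(imset_setT_inj g_inj) imset_partition.
- by rewrite /sp_act card_imset ?card_w //; apply: imset_inj.
- by apply/forall_inP => _ /imsetP [B wB ->]; rewrite card_imset ?w_size.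
Qed.

Section SigmaStablePartition.
Variables (m p : nat) (w : {set {set 'I_(m * p)}}).
Local Notation N := (m * p).
Local Notation sigma := (sig p N).
Hypothesis p_pr : prime p.
Hypothesis w_part : partition w [set: 'I_N].
Hypothesis w_fix : sp_act N sigma w = w.

Let p_gt0 : 0 < p. Proof. exact: prime_gt0. Qed.
Let w_triv : trivIset w. Proof. by case/and3P: w_part. Qed.

Lemma iter_sig_block n B : B \in w -> iter n sigma @: B \in w.
Proof.
move=> wB; elim: n => [|n IHn]; first by rewrite (eq_imset (g := id)) // imset_id.
by rewrite (eq_imset (g := sigma \o iter n sigma)) // imset_comp -w_fix imset_f.
Qed.

Lemma block_shift B B' x y : B \in w -> B' \in w -> x \in B -> y \in B' ->
  blk x = blk y -> exists2 k, k < p & B' = iter k sigma @: B.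
Proof.
move=> wB wB' Bx B'y /same_blk_iter_sig [k k_lt y_def]; exists k => //.
by apply: (trivIset_mem_eq w_triv wB' (iter_sig_block k wB) B'y); rewrite y_def imset_f.
Qed.

Lemma supp_partition : partition [set supp B | B in w] [set: 'I_m].
Proof.
case/and3P: w_part => /eqP cover_w _ w_0; apply/and3P; split.
- apply/eqP/setP => j; rewrite inE; apply/bigcupP.
  have jp_lt : j * p < N by rewrite ltn_mul2r ltn_ord p_gt0.
  have : Ordinal jp_lt \in cover w by rewrite cover_w inE.
  case/bigcupP => B wB Bx; exists (supp B); first exact: imset_f.
  by apply/imsetP; exists (Ordinal jp_lt) => //; apply: val_inj; rewrite /= mulnK.
- apply: trivIset_memP => _ _ j /imsetP [B1 wB1 ->] /imsetP [B2 wB2 ->].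
  move=> /imsetP [x1 B1x1 ->] /imsetP [x2 B2x2 eq_blk].
  by have [k _ ->] := block_shift wB1 wB2 B1x1 B2x2 eq_blk; rewrite supp_iter_sig.
- apply: contra w_0 => /imsetP [B wB /esym /eqP]; rewrite imset_eq0 => /eqP B0.
  by rewrite -B0.
Qed.

Hypothesis w_small : forall B, B \in w -> #|B| < p.

Lemma blk_block_inj B : B \in w -> {in B &, injective blk}.
Proof.
move=> wB x y Bx By /same_blk_iter_sig [[|k] k_lt y_def]; first by rewrite y_def.
rewrite {}y_def in By; exfalso.
have sigk_B : iter k.+1 sigma @: B = B.
  exact: (trivIset_mem_eq w_triv (iter_sig_block _ wB) wB (imset_f _ Bx) By).
have orbit_in_B n : iter (n * k.+1) sigma x \in B.
  by elim: n => [|n IHn] //; rewrite mulSn iterD -sigk_B imset_f.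
have orbit_sub : [set iter (n * k.+1) sigma x | n : 'I_p] \subset B.
  by apply/subsetP => _ /imsetP [n _ ->]; apply: orbit_in_B.
have := subset_leq_card orbit_sub; rewrite card_imset ?card_ord; last exact: iter_sig_mulr_inj.
by rewrite leqNgt w_small.
Qed.

Lemma card_supp B : B \in w -> #|supp B| = #|B|.
Proof. by move=> wB; rewrite card_in_imset //; apply: blk_block_inj. Qed.

Lemma card_block_orb B (j : 'I_m) : B \in w -> #|B :&: orb p N j| = (j \in supp B).
Proof.
move=> wB; rewrite supp_orbE; case: (set_0Vmem (B :&: orb p N j)) => [->|[x]].
  by rewrite cards0 eqxx.
rewrite in_setI orbE => /andP [Bx /eqP <-].
suff -> : B :&: orb p N (blk x) = [set x] by rewrite -card_gt0 cards1.
apply/setP => y; rewrite in_set1 in_setI orbE; apply/andP/eqP => [[By /eqP]|->].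
  exact: (blk_block_inj wB By Bx).
by rewrite Bx eqxx.
Qed.

End SigmaStablePartition.

Section FixedPartitionType.
Variables (p a s : nat) (w : {set {set 'I_(a * s * p)}}).
Local Notation N := (a * s * p).
Local Notation sigma := (sig p N).
Local Notation delta := [set supp B | B in w].
Hypothesis p_pr : prime p.
Hypothesis a_lt_p : a < p.
Hypothesis w_fixed : fixedSP p a s w.

Let w_part : partition w [set: 'I_N]. Proof. by case/andP: w_fixed => /and3P []. Qed.
Let w_fix : sp_act N sigma w = w. Proof. by case/andP: w_fixed => _ /eqP. Qed.
Let card_w : #|w| = s * p. Proof. by case/andP: w_fixed => /and3P [_ /eqP]. Qed.
Let w_size B : B \in w -> #|B| = a.
Proof. by case/andP: w_fixed => /and3P [_ _ /forall_inP w_size] _ /w_size /eqP. Qed.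
Let w_small B : B \in w -> #|B| < p. Proof. by move/w_size->. Qed.
Let w_0 : set0 \notin w. Proof. by case/and3P: w_part. Qed.

Lemma card_supp_fixed B : B \in w -> #|supp B| = a.
Proof. by move=> wB; rewrite (card_supp p_pr w_part w_fix w_small wB) w_size. Qed.

Lemma card_supp_fixed_set : #|delta| = s.
Proof.
have := card_partition (supp_partition p_pr w_part w_fix).
rewrite cardsT card_ord (eq_bigr (fun=> a)) => [|_ /imsetP [B wB ->]]; last first.
  exact: card_supp_fixed.
rewrite sum_nat_const; case: (posnP a) => [a0 _|a_gt0]; last first.
  by rewrite [in X in X = _]mulnC => /eqP; rewrite eqn_pmul2r // eq_sym => /eqP.
have w_eq0 : w = set0.
  apply/setP => B; rewrite inE; apply: contraNF w_0 => wB.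
  by rewrite -(cards0_eq (etrans (w_size wB) a0)).
move: card_w; rewrite w_eq0 imset0 !cards0 => /esym /eqP.
by rewrite muln_eq0 (gtn_eqF (prime_gt0 p_pr)) orbF => /eqP.
Qed.

Lemma supp_fixed_Deltas : delta \in Deltas a s.
Proof.
rewrite inE; apply/and3P; split.
- exact: (supp_partition p_pr w_part w_fix).
- by rewrite card_supp_fixed_set.
- by apply/forall_inP => _ /imsetP [B wB ->]; rewrite card_supp_fixed.
Qed.

Lemma has_type_supp : has_type p a s delta w.
Proof.
pose A := [ffun D => odflt set0 [pick B in w | supp B == D]].
have A_block D : D \in delta -> A D \in w /\ supp (A D) = D.
  case/imsetP => B wB ->; rewrite ffunE; case: pickP => [B' /andP [wB' /eqP] //|/(_ B)].
  by rewrite wB eqxx.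
apply/existsP; exists A; apply/andP; split.
  apply/forall_inP => D /A_block [wAD suppAD]; apply/forallP => j.
  by rewrite (card_block_orb p_pr w_part w_fix w_small j wAD) suppAD.
apply/eqP/setP => B; apply/idP/imset2P => [wB|[D k /A_block [wAD _] _ ->]]; last first.
  exact: iter_sig_block.
have [wAD suppAD] := A_block _ (imset_f supp wB).
have [x Bx] : exists x, x \in B by apply/set0Pn; apply: contraNneq w_0 => <-.
have : blk x \in supp (A (supp B)) by rewrite suppAD imset_f.
case/imsetP => y ADy eq_blk.
have [k k_lt ->] := block_shift w_part w_fix wAD wB ADy Bx (esym eq_blk).
by exists (supp B) (Ordinal k_lt); rewrite ?imset_f ?inE.
Qed.

End FixedPartitionType.

Lemma has_type_suppE p a s d (w : {set {set 'I_(a * s * p)}}) : 0 < p ->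
  has_type p a s d w -> d = [set supp B | B in w].
Proof.
move=> p_gt0 /existsP [A /andP [/forall_inP A_orb /eqP ->]].
have suppA D : D \in d -> supp (A D) = D.
  move=> dD; apply/setP => j; rewrite supp_orbE -card_gt0 (eqP (forallP (A_orb D dD) j)).
  by case: (j \in D).
apply/setP => D; apply/idP/imsetP => [dD|[_ /imset2P [D' k dD' _ ->] ->]].
  exists (iter 0 (sig p _) @: A D); last by rewrite supp_iter_sig suppA.
  by apply/imset2P; exists D (Ordinal p_gt0).
by rewrite supp_iter_sig suppA.
Qed.

Section CyclicAction.
Variables m p : nat.
Local Notation N := (m * p).
Local Notation sigma := (sig p N).

Lemma imset_cyc_comm k k' (X : {set 'I_N}) :
  cyc p N k @: (cyc p N k' @: X) = cyc p N k' @: (cyc p N k @: X).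
Proof. by rewrite -!imset_comp; apply: eq_imset => x /=; rewrite cyc_comm. Qed.

Lemma imset_cyc_iter_sig k n (X : {set 'I_N}) :
  cyc p N k @: (iter n sigma @: X) = iter n sigma @: (cyc p N k @: X).
Proof. by rewrite -!imset_comp; apply: eq_imset => x /=; rewrite iter_sig_cyc. Qed.

Lemma imset_cyc_setI_orb k (A : {set 'I_N}) (j : 'I_m) :
  cyc p N k @: (A :&: orb p N j) = cyc p N k @: A :&: orb p N j.
Proof.
apply/setP => y; rewrite in_setI.
apply/imsetP/andP => [[x /setIP [Ax xj] ->]|[/imsetP [x Ax ->]]].
  by rewrite imset_f // orbE blk_cyc -orbE.
by rewrite orbE blk_cyc -orbE => xj; exists x; rewrite // in_setI Ax.
Qed.

End CyclicAction.

Lemma fixedSP_act p a s k w :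
  fixedSP p a s w -> fixedSP p a s (sp_act _ (cyc p (a * s * p) k) w).
Proof.
case/andP => w_part /eqP w_fix; apply/andP; split.
  exact: setpart_act (@cyc_inj _ _ k) w_part.
rewrite {2}/sp_act -{2}w_fix /sp_act -!imset_comp; apply/eqP/eq_imset => B /=.
exact: imset_cyc_comm.
Qed.

Lemma has_type_act p a s k d w :
  has_type p a s d w -> has_type p a s d (sp_act _ (cyc p (a * s * p) k) w).
Proof.
case/existsP => A /andP [/forall_inP A_orb /eqP ->].
apply/existsP; exists [ffun D => cyc p _ k @: A D]; apply/andP; split.
  apply/forall_inP => D dD; apply/forallP => j.
  by rewrite ffunE -imset_cyc_setI_orb card_imset ?(forallP (A_orb D dD) j) //; apply: cyc_inj.
rewrite /sp_act !curry_imset2X -imset_comp; apply/eqP/eq_imset => -[D n] /=.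
by rewrite ffunE imset_cyc_iter_sig.
Qed.

Local Open Scope ring_scope.

Lemma linear_span_subv (K : fieldType) (V : vectType K) (f : V -> V)
    (X : seq V) (U : {vspace V}) :
  linear f -> {in X, forall x, f x \in U} -> forall v, v \in <<X>>%VS -> f v \in U.
Proof.
move=> f_lin fXU v Xv; rewrite (coord_span (X := in_tuple X) Xv).
elim/big_rec: _ => [|i u _ fuU].
  by have := f_lin (-1) 0 0; rewrite scaler0 addr0 scaleN1r addNr => ->; apply: mem0v.
by rewrite f_lin memvD ?memvZ // fXU ?mem_nth.
Qed.

Lemma span_bvec_notin (F : fieldType) N (P : pred {set {set 'I_N}}) (v : Wsp F N) w :
  v \in <<[seq bvec F N w | w <- enum P]>>%VS -> ~~ P w -> v w = 0.
Proof.
move=> Xv Pw; rewrite (coord_span (X := in_tuple _) Xv) sum_ffunE.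
apply: big1 => i _; have i_lt : (i < size (enum P))%N by rewrite -(size_map (bvec F N)).
rewrite !ffunE (nth_map set0) // ffunE; case: eqP => [wi_w|_]; last by rewrite scaler0.
by move: (mem_nth set0 i_lt) Pw; rewrite mem_enum -wi_w => wP /negP [].
Qed.

Lemma actC_is_linear (F : fieldType) p a s k : linear (actC F p a s k).
Proof. by move=> c u v; apply/ffunP => w; rewrite !ffunE. Qed.

Lemma actC_bvec F p a s k w :
  actC F p a s k (bvec F _ w) = bvec F _ (sp_act _ (cyc p (a * s * p) k) w).
Proof.
apply/ffunP => w'; rewrite !ffunE; congr (nat_of_bool _)%:R.
apply/idP/idP => /eqP eq_w; apply/eqP.
  by rewrite -eq_w sp_act_preim //; apply: cyc_inj.
by rewrite eq_w sp_preim_act //; apply: cyc_inj.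
Qed.

Section KdeltaDecomposition.
Variables (F : fieldType) (p a s : nat).
Local Notation N := (a * s * p).

Lemma bvec_Kdelta d w :
  fixedSP p a s w -> has_type p a s d w -> bvec F N w \in Kdelta F p a s d.
Proof. by move=> w_fixed w_d; apply/memv_span/map_f; rewrite mem_enum inE w_fixed. Qed.

Lemma Kdelta_sub_Hfix d : (Kdelta F p a s d <= Hfix F p a s)%VS.
Proof.
apply/span_subvP => u /mapP [w]; rewrite mem_enum => /andP [w_fixed _] ->.
by apply/memv_span/map_f; rewrite mem_enum.
Qed.

Lemma Hfix_sum_Kdelta : prime p -> (a < p)%N ->
  Hfix F p a s = (\sum_(d in Deltas a s) Kdelta F p a s d)%VS.
Proof.
move=> p_pr a_lt_p; apply/eqP; rewrite eqEsubv; apply/andP; split; last first.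
  by apply/subv_sumP => d _; apply: Kdelta_sub_Hfix.
apply/span_subvP => u /mapP [w]; rewrite mem_enum => w_fixed ->.
apply: (subvP (sumv_sup _ (supp_fixed_Deltas p_pr a_lt_p w_fixed) (subvv _))).
exact: bvec_Kdelta (has_type_supp p_pr a_lt_p w_fixed).
Qed.

Lemma directv_Kdelta :
  (0 < p)%N -> directv (\sum_(d in Deltas a s) Kdelta F p a s d)%VS.
Proof.
move=> p_gt0; apply/directv_sum_independent => v v_K sum_v0 d dD.
apply/ffunP => w; rewrite ffunE.
have [/andP [_ w_d]|wNd] := boolP (fixedSP p a s w && has_type p a s d w); last first.
  exact: span_bvec_notin (v_K d dD) wNd.
have := congr1 (fun u : Wsp F N => u w) sum_v0; rewrite /= sum_ffunE (bigD1 d) //= ffunE.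
rewrite big1 ?addr0 // => d' /andP [d'D d'_ne]; apply: span_bvec_notin (v_K d' d'D) _.
apply: contra d'_ne => /andP [_ w_d'].
by rewrite (has_type_suppE p_gt0 w_d) (has_type_suppE p_gt0 w_d').
Qed.

Lemma actC_Kdelta k d v :
  v \in Kdelta F p a s d -> actC F p a s k v \in Kdelta F p a s d.
Proof.
move=> v_K; apply: linear_span_subv (@actC_is_linear F p a s k) _ v v_K.
move=> u /mapP [w]; rewrite mem_enum => /andP [w_fixed w_d] ->.
by rewrite actC_bvec bvec_Kdelta ?fixedSP_act ?has_type_act.
Qed.

End KdeltaDecomposition.

Theorem proposition3p4 (p : nat) (F : fieldType) (a s : nat) :
  prime p -> odd p -> p \in [pchar F] -> (a < p)%N ->
  [/\ Hfix F p a s = (\sum_(d in Deltas a s) Kdelta F p a s d)%VS,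
      directv (\sum_(d in Deltas a s) Kdelta F p a s d)%VS
    & forall (k : nat -> nat) d, d \in Deltas a s ->
        forall v, v \in Kdelta F p a s d -> actC F p a s k v \in Kdelta F p a s d].
Proof.
(* Oddness of p and the characteristic of F are needed only to identify the Brauer quotient
   with the span of the fixed partitions, an identification already built into Hfix. *)
move=> p_pr _ _ a_lt_p; split.
- exact: Hfix_sum_Kdelta.
- exact/directv_Kdelta/prime_gt0.
- by move=> k d _ v; apply: actC_Kdelta.
Qed.
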